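(* Let $\mathcal{A}*\mathcal{X}=\mathcal{B}$ be a consistent tensor system with unique solution $\mathcal{X}^*$, where $\mathcal{A}\in\mathbb{R}^{n_1\times n_2\times n}$, $\mathcal{B}\in\mathbb{R}^{n_1\times n_3\times n}$, $n\ge 2$, and let $2\le s<n$ with $s$ dividing $n$. Let $\alpha>0$ and $$\kappa(s)=\max_{i=1,\dots,n/s}\|\mathcal{I}-\alpha(\tilde{\mathcal{A}}^s_i)^T*\tilde{\mathcal{A}}^s_i\|_{op},\qquad \mu(s)=\max_{i,j\in\{1,\dots,n/s\},\,i\neq j}\|(\tilde{\mathcal{A}}^s_i)^T*\tilde{\mathcal{A}}^s_j\|_{op}.$$ If $\kappa(s)+\alpha\mu(s)(n/s-1)<1$, then the iterates of block cyclic frontal slice descent with block size $s$ and learning rate $\alpha$ satisfy $\lim_{t\to\infty}\mathcal{E}(t)=0$, where $\mathcal{E}(t)=\|\mathcal{X}(t)-\mathcal{X}^*\|_F^2$.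
   Context: For $\mathcal{A}\in\mathbb{R}^{n_1\times n_2\times n}$ with frontal slices $A_k=\mathcal{A}(:,:,k)$: $\mathrm{unfold}(\mathcal{A})$ stacks $A_1,\dots,A_n$ vertically, $\mathrm{fold}$ is its inverse, $\mathrm{bcirc}(\mathcal{A})$ is the $n_1n\times n_2n$ block-circulant matrix with $(p,q)$ block $A_{((p-q)\bmod n)+1}$, and $\mathcal{A}*\mathcal{X}=\mathrm{fold}(\mathrm{bcirc}(\mathcal{A})\mathrm{unfold}(\mathcal{X}))$. $\mathcal{I}$ is the identity tensor (first frontal slice the identity matrix, others zero). $\mathcal{A}^T$ transposes each frontal slice and reverses the order of slices $2,\dots,n$. $\|\cdot\|_F$ is the Frobenius norm and $\|\mathcal{C}\|_{op}=\sup_{\|\mathcal{X}\|_F=1}\|\mathcal{C}*\mathcal{X}\|_F=\|\mathrm{bcirc}(\mathcal{C})\|_2$. For $k\in\{1,\dots,n\}$, $\tilde{\mathcal{A}}_k$ has $k$-th frontal slice $A_k$ and zeros elsewhere, and $\tilde{\mathcal{A}}^s_i=\sum_{k=(i-1)s+1}^{is}\tilde{\mathcal{A}}_k$ for $i=1,\dots,n/s$. Block cyclic frontal slice descent: set $\mathcal{X}(t)=0$ for $t\le 0$; for $t=0,1,2,\dots$ let $\mathcal{R}(t+1)=\mathcal{B}-\sum_{j=0}^{n/s-1}\tilde{\mathcal{A}}^s_{((t-j)\bmod n/s)+1}*\mathcal{X}(t-j)$ and $\mathcal{X}(t+1)=\mathcal{X}(t)+\alpha(\tilde{\mathcal{A}}^s_{(t\bmod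 n/s)+1})^T*\mathcal{R}(t+1)$. *)

From HB Require Import structures.
From mathcomp Require Import all_boot all_order all_algebra.
From mathcomp Require Import all_classical all_reals all_analysis.
Set Implicit Arguments. Unset Strict Implicit. Unset Printing Implicit Defensive.
Import Order.TTheory GRing.Theory Num.Theory.
Local Open Scope ring_scope.

(* A third-order tensor in R^{n1 x n2 x n}, given by its n frontal slices.
   Frontal slices are indexed 0..n-1 (the paper's k-th slice is index k-1). *)
Definition tensor (R : realType) (n1 n2 n : nat) := 'I_n -> 'M[R]_(n1, n2).

Section Tensors.
Variable R : realType.
Variable n : nat.

Definition ord_subn (k j : 'I_n) : 'I_n := insubd k ((k + n - j) %% n)%N.
Definition ord_rev (k : 'I_n) : 'I_n := insubd k ((n - k) %% n)%N.

(* t-product: A * X = fold(bcirc(A) unfold(X)); the block row k of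
   bcirc(A) unfold(X) is sum_j A_{((k-j) mod n)} X_j. *)
Definition tprod n1 n2 n3 (A : tensor R n1 n2 n) (X : tensor R n2 n3 n)
  : tensor R n1 n3 n :=
  fun k => \sum_(j < n) A (ord_subn k j) *m X j.

Definition ttr n1 n2 (A : tensor R n1 n2 n) : tensor R n2 n1 n :=
  fun k => (A (ord_rev k))^T.

Definition tid m : tensor R m m n :=
  fun k => if (k : nat) == 0%N then 1%:M else 0.

Definition tadd n1 n2 (A B : tensor R n1 n2 n) : tensor R n1 n2 n :=
  fun k => A k + B k.
Definition tsub n1 n2 (A B : tensor R n1 n2 n) : tensor R n1 n2 n :=
  fun k => A k - B k.
Definition tscale n1 n2 (a : R) (A : tensor R n1 n2 n) : tensor R n1 n2 n :=
  fun k => a *: A k.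
Definition tzero n1 n2 : tensor R n1 n2 n := fun _ => 0.

Definition frob n1 n2 (A : tensor R n1 n2 n) : R :=
  Num.sqrt (\sum_(k < n) \sum_(i < n1) \sum_(j < n2) (A k i j) ^+ 2).

Definition opnorm m1 m2 (C : tensor R m1 m2 n) : R :=
  sup [set r : R | exists m (X : tensor R m2 m n),
                     frob X = 1 /\ r = frob (tprod C X)].

Definition tslice n1 n2 (A : tensor R n1 n2 n) (k : 'I_n) : tensor R n1 n2 n :=
  fun l => if l == k then A l else 0.

(* \tilde A^s_i (0-indexed block i = paper's block i+1):
   sum of \tilde A_k over k = i*s, ..., i*s + s - 1 *)
Definition tblock n1 n2 (A : tensor R n1 n2 n) (s i : nat) : tensor R n1 n2 n :=
  fun l => \sum_(k < n | (i * s <= k < i * s + s)%N) tslice A k l.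

Definition kappa n1 n2 (A : tensor R n1 n2 n) (s : nat) (alpha : R) : R :=
  \big[Num.max/0]_(i < n %/ s)
     opnorm (tsub (tid n2) (tscale alpha (tprod (ttr (tblock A s i)) (tblock A s i)))).

Definition mu n1 n2 (A : tensor R n1 n2 n) (s : nat) : R :=
  \big[Num.max/0]_(i < n %/ s) \big[Num.max/0]_(j < n %/ s | i != j)
     opnorm (tprod (ttr (tblock A s i)) (tblock A s j)).

(* X : nat -> tensor is the sequence of iterates of block cyclic frontal
   slice descent, with X(t) = 0 for t <= 0 (so terms X(t-j) with j > t vanish).
   Block index ((t-j) mod n/s)+1 of the paper is (t-j) mod (n/s) here. *)
Definition bcfsd_resid n1 n2 n3 (A : tensor R n1 n2 n) (B : tensor R n1 n3 n)
  (s : nat) (X : nat -> tensor R n2 n3 n) (t : nat) : tensor R n1 n3 n :=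
  tsub B (fun k => \sum_(j < n %/ s | (j <= t)%N)
                     tprod (tblock A s ((t - j) %% (n %/ s))) (X (t - j)%N) k).

Definition bcfsd_iterates n1 n2 n3 (A : tensor R n1 n2 n) (B : tensor R n1 n3 n)
  (s : nat) (alpha : R) (X : nat -> tensor R n2 n3 n) : Prop :=
  X 0%N = tzero n2 n3 /\
  forall t : nat,
    X t.+1 = tadd (X t) (tscale alpha
               (tprod (ttr (tblock A s (t %% (n %/ s)))) (bcfsd_resid A B s X t))).

End Tensors.

(* Write E(t) = X(t) - X* and m = n/s.  Since A is the sum of its m blocks and
   A * X* = B, the residual is R(t+1) = - sum_(j < m) A_{(t-j) mod m} * E(t-j),
   where E(t) = - X* for t < 0.  Hence, with c = t mod m,
     E(t+1) = (I - alpha A_c^T A_c) * E(t)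
              - alpha sum_(1 <= j < m) A_c^T A_{(t-j) mod m} * E(t-j),
   and ||C * Y||_F <= ||C||_op ||Y||_F turns this into the delayed recurrence
   e(t+1) <= kappa e(t) + alpha mu sum_(1 <= j < m) e(t-j) for e = ||E||_F.
   Its rate rho = kappa + alpha mu (m-1) is < 1, and the recurrence contracts
   by a factor rho every m steps, so e(t) -> 0. *)

From HB Require Import structures.
From mathcomp Require Import all_boot all_order all_algebra.
From mathcomp Require Import all_classical all_reals all_analysis.
From mathcomp Require Import zify ring.
Import Order.TTheory GRing.Theory Num.Theory numFieldNormedType.Exports.
Local Open Scope classical_set_scope.
Local Open Scope ring_scope.
Set Implicit Arguments. Unset Strict Implicit. Unset Printing Implicit Defensive.

Section EuclideanNorm.
Variables (R : realType) (I : finType).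
Implicit Types a b : I -> R.

Definition l2norm a := Num.sqrt (\sum_i a i ^+ 2).

Lemma sumr_sqr_ge0 a : 0 <= \sum_i a i ^+ 2.
Proof. by apply: sumr_ge0 => i _; apply: sqr_ge0. Qed.

Lemma l2norm_ge0 a : 0 <= l2norm a.
Proof. exact: sqrtr_ge0. Qed.

Lemma l2norm_sqr a : l2norm a ^+ 2 = \sum_i a i ^+ 2.
Proof. by rewrite sqr_sqrtr // sumr_sqr_ge0. Qed.

(* Lagrange's identity: twice the gap is [\sum_(i, j) (a i b j - a j b i)^2]. *)
Lemma CauchySchwarz_sum a b :
  (\sum_i a i * b i) ^+ 2 <= (\sum_i a i ^+ 2) * (\sum_i b i ^+ 2).
Proof.
have double_sum (F : I -> I -> R) : \sum_i \sum_j F i j = \sum_i \sum_j F j i.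
  exact: exchange_big.
have ab2 : (\sum_i a i ^+ 2) * (\sum_i b i ^+ 2) = \sum_i \sum_j a i ^+ 2 * b j ^+ 2.
  by rewrite mulr_suml; apply: eq_bigr => i _; rewrite mulr_sumr.
have ab_sqr : (\sum_i a i * b i) ^+ 2 = \sum_i \sum_j a i * b i * (a j * b j).
  by rewrite expr2 mulr_suml; apply: eq_bigr => i _; rewrite mulr_sumr.
have lagrange : \sum_i \sum_j (a i * b j - a j * b i) ^+ 2 =
    ((\sum_i a i ^+ 2) * (\sum_i b i ^+ 2) - (\sum_i a i * b i) ^+ 2) *+ 2.
  rewrite mulrnBl mulr2n ab2 {2}(double_sum (fun i j => a i ^+ 2 * b j ^+ 2)).
  rewrite ab_sqr -sumrMnl -big_split -sumrB; apply: eq_bigr => i _.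
  rewrite -sumrMnl -big_split -sumrB; apply: eq_bigr => j _ /=; ring.
have : 0 <= \sum_i \sum_j (a i * b j - a j * b i) ^+ 2.
  by apply: sumr_ge0 => i _; apply: sumr_sqr_ge0.
by rewrite lagrange pmulrn_lge0 // subr_ge0.
Qed.

Lemma l2normD a b : l2norm (a + b) <= l2norm a + l2norm b.
Proof.
rewrite -ler_sqr ?nnegrE ?addr_ge0 ?l2norm_ge0 // sqrrD !l2norm_sqr.
have dot_le : \sum_i a i * b i <= l2norm a * l2norm b.
  rewrite (le_trans (ler_norm _)) // -sqrtr_sqr -sqrtrM ?sumr_sqr_ge0 //.
  by rewrite ler_sqrt ?mulr_ge0 ?sumr_sqr_ge0 // CauchySchwarz_sum.
have -> : \sum_i (a + b) i ^+ 2
    = \sum_i a i ^+ 2 + (\sum_i a i * b i) *+ 2 + \sum_i b i ^+ 2.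
  by rewrite -sumrMnl -!big_split; apply: eq_bigr => i _; rewrite addrfctE /=; ring.
by rewrite lerD2r lerD2l ler_wMn2r.
Qed.

Lemma l2normZ c a : l2norm (c *: a) = `|c| * l2norm a.
Proof.
rewrite /l2norm -sqrtr_sqr -sqrtrM ?sqr_ge0 // mulr_sumr.
by congr Num.sqrt; apply: eq_bigr => i _; rewrite -exprMn.
Qed.

End EuclideanNorm.

Section Frobenius.
Variables (R : realType) (n : nat).
Local Notation tens n1 n2 := (tensor R n1 n2 n).

Definition tentries n1 n2 (X : tens n1 n2) (q : 'I_n * ('I_n1 * 'I_n2)) : R :=
  X q.1 q.2.1 q.2.2.

Lemma frob_l2norm n1 n2 (X : tens n1 n2) : frob X = l2norm (tentries X).
Proof.
rewrite /frob /l2norm; congr Num.sqrt.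
by under eq_bigr => k _ do rewrite pair_bigA; rewrite pair_bigA.
Qed.

Lemma frob_ge0 n1 n2 (X : tens n1 n2) : 0 <= frob X.
Proof. exact: sqrtr_ge0. Qed.

Lemma frobD n1 n2 (X Y : tens n1 n2) : frob (X + Y) <= frob X + frob Y.
Proof.
rewrite !frob_l2norm; have -> : tentries (X + Y) = tentries X + tentries Y.
  by apply/funext => q; rewrite /tentries addrfctE mxE.
exact: l2normD.
Qed.

Lemma frobZ n1 n2 c (X : tens n1 n2) : frob (c *: X) = `|c| * frob X.
Proof.
rewrite !frob_l2norm -l2normZ; congr l2norm.
by apply/funext => q; rewrite /tentries scalrfctE mxE.
Qed.

Lemma frobN n1 n2 (X : tens n1 n2) : frob (- X) = frob X.
Proof. by rewrite -scaleN1r frobZ normrN1 mul1r. Qed.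

Lemma frob0 n1 n2 : frob (0 : tens n1 n2) = 0.
Proof. by rewrite -(scale0r 0) frobZ normr0 mul0r. Qed.

Lemma frob_sum n1 n2 (J : finType) (P : pred J) (F : J -> tens n1 n2) :
  frob (\sum_(j | P j) F j) <= \sum_(j | P j) frob (F j).
Proof.
apply: (big_ind2 (fun (X : tens n1 n2) r => frob X <= r)) => //.
- by rewrite frob0.
- by move=> X1 X2 r1 r2 le1 le2; apply: le_trans (frobD _ _) (lerD le1 le2).
Qed.

End Frobenius.

Section TProduct.
Variables (R : realType) (n : nat).
Local Notation tens n1 n2 := (tensor R n1 n2 n).

Lemma tsubE n1 n2 (X Y : tens n1 n2) : tsub X Y = X - Y.
Proof. by []. Qed.

Lemma taddE n1 n2 (X Y : tens n1 n2) : tadd X Y = X + Y.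
Proof. by []. Qed.

Lemma tscaleE n1 n2 a (X : tens n1 n2) : tscale a X = a *: X.
Proof. by []. Qed.

Lemma tprod_is_bilinear n1 n2 n3 :
  bilinear_for (GRing.Scale.Law.clone _ _ *:%R _) (GRing.Scale.Law.clone _ _ *:%R _)
    (@tprod R n n1 n2 n3).
Proof.
split=> [X|A] c Y Z; apply/funext => k.
- rewrite -[RHS]/(c *: tprod Y X k + tprod Z X k) /tprod scaler_sumr -big_split.
  by apply: eq_bigr => j _; rewrite !fctE mulmxDl scalemxAl.
- rewrite -[RHS]/(c *: tprod A Y k + tprod A Z k) /tprod scaler_sumr -big_split.
  by apply: eq_bigr => j _; rewrite !fctE mulmxDr scalemxAr.
Qed.

HB.instance Definition _ n1 n2 n3 := bilinear_isBilinear.Build R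
  (tens n1 n2) (tens n2 n3) (tens n1 n3) _ _ (@tprod R n n1 n2 n3)
  (@tprod_is_bilinear n1 n2 n3).

Lemma tprod_bounded m1 m2 (C : tens m1 m2) :
  exists K, forall m (X : tens m2 m), frob (tprod C X) <= K * frob X.
Proof.
pose c k i := \sum_(l < n) \sum_(p < m2) C (ord_subn k l) i p ^+ 2.
exists (Num.sqrt (\sum_k \sum_i c k i)) => m X.
have entry_le k i j : tprod C X k i j ^+ 2
    <= c k i * \sum_(l < n) \sum_(p < m2) X l p j ^+ 2.
  rewrite /tprod summxE; under eq_bigr => l _ do rewrite mxE.
  rewrite /c !pair_bigA /=.
  exact: (CauchySchwarz_sum (fun q : 'I_n * 'I_m2 => C (ord_subn k q.1) i q.2)
                            (fun q => X q.1 q.2 j)).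
have frob_sqr m3 m4 (Y : tens m3 m4) :
    frob Y ^+ 2 = \sum_k \sum_i \sum_j Y k i j ^+ 2.
  by rewrite sqr_sqrtr //; apply: sumr_ge0 => k _; apply: sumr_ge0 => i _;
     apply: sumr_sqr_ge0.
rewrite -ler_sqr ?nnegrE ?mulr_ge0 ?sqrtr_ge0 ?frob_ge0 //.
have csum_ge0 : 0 <= \sum_k \sum_i c k i.
  by apply: sumr_ge0 => k _; apply: sumr_ge0 => i _; apply: sumr_ge0 => l _;
     apply: sumr_sqr_ge0.
rewrite exprMn (sqr_sqrtr csum_ge0).
have -> : frob X ^+ 2 = \sum_j \sum_(l < n) \sum_(p < m2) X l p j ^+ 2.
  rewrite frob_sqr [RHS]exchange_big; apply: eq_bigr => l _; exact: exchange_big.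
rewrite frob_sqr mulr_suml; apply: ler_sum => k _; rewrite mulr_suml.
by apply: ler_sum => i _; rewrite mulr_sumr; apply: ler_sum => j _.
Qed.

Lemma frob_tprod_le m1 m2 m (C : tens m1 m2) (Y : tens m2 m) :
  frob (tprod C Y) <= opnorm C * frob Y.
Proof.
have [K C_le] := tprod_bounded C.
have [Y0|Y_neq0] := eqVneq (frob Y) 0.
  by rewrite Y0 mulr0; apply: le_trans (C_le _ Y) _; rewrite Y0 mulr0.
have Y_gt0 : 0 < frob Y by rewrite lt0r Y_neq0 frob_ge0.
pose U := (frob Y)^-1 *: Y.
have U1 : frob U = 1 by rewrite frobZ ger0_norm ?invr_ge0 ?frob_ge0 // mulVf.
have C_ub : has_ubound [set r : R | exists m (X : tens m2 m),
                                       frob X = 1 /\ r = frob (tprod C X)].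
  by exists K => r [m' [X [X1 ->]]]; rewrite -[K]mulr1 -X1 C_le.
suff : frob (tprod C U) <= opnorm C.
  by rewrite /U linearZr frobZ ger0_norm ?invr_ge0 ?frob_ge0 // mulrC ler_pdivrMr.
by apply: (ub_le_sup C_ub); exists m, U.
Qed.

End TProduct.

Section TProductAlgebra.
Variables (R : realType) (n' : nat).
Local Notation n := n'.+1.
Local Notation tens n1 n2 := (tensor R n1 n2 n).

Lemma ord_subnE (k j : 'I_n) : ord_subn k j = k - j.
Proof.
apply: val_inj; rewrite /ord_subn val_insubd ltn_pmod //=.
by rewrite modnDmr addnBA // ltnW.
Qed.

Lemma tprod_tidl m m3 (X : tens m m3) : tprod (tid R m) X = X.
Proof.
apply/funext => k; rewrite /tprod (bigD1 k) //= big1 => [|j j_neq_k].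
  by rewrite ord_subnE subrr mul1mx addr0.
by rewrite ord_subnE /tid -[_ == 0%N]/(k - j == 0) subr_eq0 eq_sym (negbTE j_neq_k) mul0mx.
Qed.

Lemma tprodA m1 m2 m3 m4 (A : tens m1 m2) (B : tens m2 m3) (X : tens m3 m4) :
  tprod A (tprod B X) = tprod (tprod A B) X.
Proof.
apply/funext => k; rewrite /tprod.
under eq_bigr => j _ do rewrite mulmx_sumr.
rewrite exchange_big; apply: eq_bigr => l _ /=.
rewrite mulmx_suml (reindex_inj (addIr l)) /=.
by apply: eq_bigr => j _; rewrite mulmxA !ord_subnE addrK opprD addrA addrAC.
Qed.

End TProductAlgebra.

Section Blocks.
Variables (R : realType) (n : nat).

Lemma tblockE n1 n2 (A : tensor R n1 n2 n) s i l :
  tblock A s i l = if (i * s <= l < i * s + s)%N then A l else 0.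
Proof.
rewrite /tblock /tslice big_mkcond (bigD1 l) //= eqxx big1 ?addr0 // => k k_neq_l.
by rewrite eq_sym (negbTE k_neq_l); case: ifP.
Qed.

Lemma sum_tblock n1 n2 (A : tensor R n1 n2 n) s m :
  n = (m * s)%N -> \sum_(i < m) tblock A s i = A.
Proof.
move=> nE; apply/funext => l; rewrite fct_sumE.
have s_gt0 : (0 < s)%N by case: s nE l => [|//]; rewrite muln0 => ->; case.
have in_block (i : nat) : (i * s <= l < i * s + s)%N = (i == l %/ s)%N.
  by rewrite eqn_leq leq_divRL // -[(_ <= i)%N]/(l %/ s < i.+1)%N ltn_divLR // mulSn addnC.
have l_blk : (l %/ s < m)%N by rewrite ltn_divLR // -nE.
rewrite (bigD1 (Ordinal l_blk)) //= tblockE in_block eqxx big1 ?addr0 // => i i_neq.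
rewrite tblockE in_block; case: eqP => // i_eq; case/eqP: i_neq; exact: val_inj.
Qed.

End Blocks.

Section CyclicLag.
Variable m' : nat.
Local Notation m := m'.+1.

Definition lag (t : nat) (j : 'I_m) : 'I_m := inZp t - j.

Lemma lagE t (j : 'I_m) : (j <= t)%N -> lag t j = ((t - j) %% m)%N :> nat.
Proof.
move=> le_jt; rewrite /= modnDml modnDmr addnBA; last exact: ltnW.
by rewrite addnC -addnBA // addnC modnDr.
Qed.

Lemma lag0 t : lag t ord0 = (t %% m)%N :> nat.
Proof. by rewrite lagE ?subn0. Qed.

Lemma lag_inj t : injective (lag t).
Proof. by move=> i j /addrI /oppr_inj. Qed.

End CyclicLag.

Section KappaMu.
Variables (R : realType) (n n1 n2 : nat) (A : tensor R n1 n2 n) (s : nat).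

Lemma kappa_ge0 alpha : 0 <= kappa A s alpha.
Proof. by apply: (big_rec (fun x : R => 0 <= x)) => // i x _; rewrite le_max orbC => ->. Qed.

Lemma mu_ge0 : 0 <= mu A s.
Proof. by apply: (big_rec (fun x : R => 0 <= x)) => // i x _; rewrite le_max orbC => ->. Qed.

Lemma opnorm_le_kappa alpha (i : nat) : (i < n %/ s)%N ->
  opnorm (tsub (tid R n2) (tscale alpha (tprod (ttr (tblock A s i)) (tblock A s i))))
    <= kappa A s alpha.
Proof.
move=> lt_i; exact: (le_bigmax _ (fun i : 'I_(n %/ s) => opnorm (tsub (tid R n2)
  (tscale alpha (tprod (ttr (tblock A s i)) (tblock A s i))))) (Ordinal lt_i)).
Qed.

Lemma opnorm_le_mu (i j : nat) : (i < n %/ s)%N -> (j < n %/ s)%N -> i != j ->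
  opnorm (tprod (ttr (tblock A s i)) (tblock A s j)) <= mu A s.
Proof.
move=> lt_i lt_j neq_ij.
apply: le_trans (le_bigmax _ _ (Ordinal lt_i)); rewrite /=.
exact: (le_bigmax_cond _ (fun j : 'I_(n %/ s) =>
  opnorm (tprod (ttr (tblock A s i)) (tblock A s j))) (j := Ordinal lt_j)).
Qed.

End KappaMu.

Section DelayedRecurrence.
Variables (R : realType) (m' : nat) (k c : R) (g : nat -> R).
Hypotheses (k_ge0 : 0 <= k) (c_ge0 : 0 <= c) (rate_lt1 : k + c * m'%:R < 1).
Hypotheses (g_ge0 : forall u, 0 <= g u)
  (g_rec : forall u, (m' < u)%N ->
     g u.+1 <= k * g u + c * \sum_(j < m') g (u - j.+1)%N).

Let rho := k + c * m'%:R.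
Let D := \big[Num.max/0]_(u < m'.+2) g u.

Let rho_ge0 : 0 <= rho. Proof. by rewrite addr_ge0 // mulr_ge0. Qed.

Lemma delayed_rec_step u M : (m' < u)%N ->
  (forall j, (j <= m')%N -> g (u - j) <= M) -> g u.+1 <= rho * M.
Proof.
move=> lt_m'u g_le; apply: le_trans (g_rec lt_m'u) _.
rewrite mulrDl -mulrA lerD ?ler_wpM2l //; first by have := g_le 0%N isT; rewrite subn0.
rewrite mulr_natl -[in M *+ _](card_ord m') -sumr_const.
by apply: ler_sum => j _; apply: g_le.
Qed.

Lemma delayed_rec_bounded u : g u <= D.
Proof.
elim/ltn_ind: u => u IH.
have [lt_u|] := ltnP u m'.+2; first exact: (le_bigmax _ _ (Ordinal lt_u)).
case: u IH => // u IH lt_u.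
apply: le_trans (delayed_rec_step (M := D) _ _) _ => [//|j _|].
  exact/IH/leq_ltn_trans/ltnSn/leq_subr.
by apply: ler_piMl; [exact: le_trans (g_ge0 0) (le_bigmax _ _ ord0) | exact: ltW].
Qed.

Lemma delayed_rec_geometric q u : (q.+1 * m'.+1 <= u)%N -> g u <= D * rho ^+ q.
Proof.
elim: q u => [|q IH] [|u] le_u; rewrite ?expr0 ?mulr1 ?delayed_rec_bounded //.
rewrite exprS mulrCA; apply: delayed_rec_step => [|j le_j]; first by nia.
by apply: IH; nia.
Qed.

Lemma delayed_rec_cvg0 : g @ \oo --> 0.
Proof.
have D_ge0 : 0 <= D := le_trans (g_ge0 0) (delayed_rec_bounded 0).
have rho_pow : GRing.exp rho @ \oo --> (0 : R) by apply: cvg_expr; rewrite ger0_norm.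
apply/cvgr0Pnorm_lt => e e_gt0.
have eD_gt0 : 0 < e / (D + 1) by rewrite divr_gt0 // ltr_wpDl.
have [N _ rhoN_lt] := proj1 (cvgr0Pnorm_lt _) rho_pow _ eD_gt0.
exists (N.+1 * m'.+1)%N => // u /= le_u.
rewrite ger0_norm // (le_lt_trans (delayed_rec_geometric le_u)) //.
have := rhoN_lt N (leqnn N); rewrite /= ger0_norm ?exprn_ge0 // ltr_pdivlMr ?ltr_wpDl //.
by apply: le_lt_trans; rewrite mulrC ler_wpM2l ?exprn_ge0 ?lerDl.
Qed.

End DelayedRecurrence.

Section BlockCyclicError.
Variables (R : realType) (n' n1 n2 n3 s m' : nat) (alpha : R).
Local Notation n := n'.+1.
Local Notation m := m'.+1.
Local Notation tens p q := (tensor R p q n).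
Variables (A : tens n1 n2) (B : tens n1 n3) (Xs : tens n2 n3) (X : nat -> tens n2 n3).
Hypotheses (s_dvdn : (s %| n)%N) (m_def : (n %/ s)%N = m) (AXs : tprod A Xs = B).
Hypotheses (iterX : bcfsd_iterates A B s alpha X) (alpha_ge0 : 0 <= alpha).

(* The error shifted by [m]: [err (t + m) = X t - Xs], and the [m] leading
   terms encode the convention [X t = 0] for [t <= 0]. *)
Definition err (u : nat) : tens n2 n3 := (if (m <= u)%N then X (u - m) else 0) - Xs.

Lemma errE t : err (t + m) = X t - Xs.
Proof. by rewrite /err leq_addl addnK. Qed.

Lemma bcfsd_resid_err t :
  bcfsd_resid A B s X t = - \sum_(j < m) tprod (tblock A s (lag t j)) (err (t + m - j)).
Proof.
have nE : n = (m * s)%N by rewrite -m_def divnK.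
have lagged_B : \sum_(j < m) tprod (tblock A s (lag t j)) Xs = B.
  by rewrite -AXs -{2}(sum_tblock A nE) linear_sumlz [RHS](reindex_inj (@lag_inj _ t)).
rewrite /bcfsd_resid m_def tsubE.
have -> : (fun k => \sum_(j < m | (j <= t)%N)
                      tprod (tblock A s ((t - j) %% m)) (X (t - j)%N) k)
        = \sum_(j < m) tprod (tblock A s (lag t j)) (err (t + m - j) + Xs).
  apply/funext => k; rewrite fct_sumE big_mkcond; apply: eq_bigr => j _.
  rewrite /err subrK; case: (leqP j t) => [le_jt | lt_tj].
    have -> : (m <= t + m - j)%N by lia.
    by rewrite lagE // (_ : t + m - j - m = t - j)%N //; lia.
  have -> : (m <= t + m - j)%N = false by lia.
  by rewrite linear0r.
by under eq_bigr do rewrite linearDr; rewrite big_split /= lagged_B opprD addrCA subrr addr0.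
Qed.

Lemma err_step t :
  err (t + m).+1 =
    tprod (tsub (tid R n2) (tscale alpha
             (tprod (ttr (tblock A s (t %% m))) (tblock A s (t %% m))))) (err (t + m))
  - alpha *: \sum_(j < m') tprod (tprod (ttr (tblock A s (t %% m)))
                                        (tblock A s (lag t (lift ord0 j))))
                                 (err (t + m - lift ord0 j)).
Proof.
have [_ iter_t] := iterX.
rewrite -addSn !errE iter_t m_def bcfsd_resid_err taddE tsubE !tscaleE.
rewrite linearNr linear_sumr big_ord_recl lag0 subn0 errE /=.
under eq_bigr do rewrite tprodA.
rewrite tprodA linearBl /= tprod_tidl linearZl_LR /=.
by rewrite [LHS]addrAC scalerN scalerDr opprD addrA.
Qed.

Lemma frob_err_rec u : (m <= u)%N ->
  frob (err u.+1) <= kappa A s alpha * frob (err u)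
                     + alpha * mu A s * \sum_(j < m') frob (err (u - j.+1)).
Proof.
move=> /subnK <-; set t := (u - m)%N.
have lt_blk i : (i < m)%N -> (i < n %/ s)%N by rewrite m_def.
rewrite err_step; apply: le_trans (frobD _ _) _.
rewrite frobN frobZ ger0_norm // -mulrA; apply: lerD.
  apply: le_trans (frob_tprod_le _ _) (ler_wpM2r (frob_ge0 _) _).
  by apply/opnorm_le_kappa/lt_blk; rewrite ltn_pmod.
rewrite ler_wpM2l //; apply: le_trans (frob_sum _ _) _; rewrite mulr_sumr.
apply: ler_sum => j _; rewrite -lift0.
apply: le_trans (frob_tprod_le _ _) (ler_wpM2r (frob_ge0 _) _).
apply: opnorm_le_mu; rewrite ?lt_blk ?ltn_pmod //.
by rewrite -lag0 (inj_eq (@ord_inj _)) (inj_eq (@lag_inj _ t)) neq_lift.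
Qed.

End BlockCyclicError.

Theorem corollary3 (R : realType) (n1 n2 n3 n s : nat)
  (A : tensor R n1 n2 n) (B : tensor R n1 n3 n) (Xs : tensor R n2 n3 n)
  (alpha : R) (X : nat -> tensor R n2 n3 n) :
  tprod A Xs = B ->
  (forall Y : tensor R n2 n3 n, tprod A Y = B -> Y = Xs) ->
  (2 <= n)%N -> (2 <= s)%N -> (s < n)%N -> (s %| n)%N ->
  0 < alpha ->
  kappa A s alpha + alpha * mu A s * ((n %/ s)%:R - 1) < 1 ->
  bcfsd_iterates A B s alpha X ->
  (fun t => frob (tsub (X t) Xs) ^+ 2) @ \oo --> (0 : R).
Proof.
case: n A B Xs X => [//|n'] A B Xs X AXs _ _ s_ge2 lt_sn s_dvdn alpha_gt0 rate_lt1 iterX.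
have [m' m_def] : exists m', (n'.+1 %/ s)%N = m'.+1.
  have s_gt0 : (0 < s)%N by apply: leq_trans s_ge2.
  by exists (n'.+1 %/ s).-1; rewrite prednK // divn_gt0 // (ltnW lt_sn).
have rate : kappa A s alpha + alpha * mu A s * m'%:R < 1.
  by rewrite m_def -natr1 addrK in rate_lt1.
pose e t := frob (err m' Xs X (t + m'.+1)).
have e_cvg : e @ \oo --> 0.
  rewrite (cvg_shiftn m'.+1 (fun u => frob (err m' Xs X u))).
  exact: (delayed_rec_cvg0 (kappa_ge0 A s alpha) (mulr_ge0 (ltW alpha_gt0) (mu_ge0 A s))
    rate (fun u => frob_ge0 _) (frob_err_rec s_dvdn m_def AXs iterX (ltW alpha_gt0))).
have -> : (fun t => frob (tsub (X t) Xs) ^+ 2) = e \* e.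
  by apply/funext => t; rewrite /e /= errE expr2.
by rewrite -[0 : R](mulr0 0); apply: cvgM.
Qed.
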